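(* Let $\mathcal X$ be a finite abelian group, $\mathcal Z$ a finite set, $P_{XZ}$ a distribution on $\mathcal X\times\mathcal Z$, and consider the conditional additive channel $W_{XZ|X}(x,z|x'):=P_{XZ}(x-x',z)$ from $\mathcal X$ to $\mathcal X\times\mathcal Z$. For any finite set $\mathcal M$, any distribution $P_M$ on $\mathcal M$ and any $c>0$, \[ P_{js}(P_M,W_{XZ|X})\le \sum_{\substack{(m,x,z):\ P_{XZ}(x,z)>0,\\ P_M(m)P_{X|Z}(x|z)\le c/|\mathcal X|}}P_M(m)P_{XZ}(x,z)\;+\;\frac1c, \] where $P_{X|Z}(x|z):=P_{XZ}(x,z)/P_Z(z)$ and $P_Z(z):=\sum_xP_{XZ}(x,z)$.
   Context: A code $\phi=(\mathsf e,\mathsf d)$ for a channel $W_{Y|X}$ consists of $\mathsf e:\mathcal M\to\mathcal X$ and $\mathsf d:\mathcal Y\to\mathcal M$ (here $\mathcal Y=\mathcal X\times\mathcal Z$); $P_{js}[\phi|P_M,W_{Y|X}]:=\sum_{m}P_M(m)W_{Y|X}(\{y:\mathsf d(y)\ne m\}|\mathsf e(m))$ and $P_{js}(P_M,W_{Y|X}):=\inf_\phi P_{js}[\phi|P_M,W_{Y|X}]$. *)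

From HB Require Import structures.
From mathcomp Require Import all_boot all_order all_algebra.
Set Implicit Arguments. Unset Strict Implicit. Unset Printing Implicit Defensive.
Import Order.TTheory GRing.Theory Num.Theory.
Local Open Scope ring_scope.

Definition is_dist (R : realFieldType) (T : finType) (P : T -> R) : Prop :=
  (forall t, 0 <= P t) /\ \sum_(t : T) P t = 1.

(* a channel W_{Y|X}, given as W x y = W(y|x) *)
Definition channel (R : realFieldType) (X Y : finType) := X -> Y -> R.

Definition code (M X Y : finType) := ({ffun M -> X} * {ffun Y -> M})%type.

Definition Pjs_code (R : realFieldType) (M X Y : finType)
  (PM : M -> R) (W : channel R X Y) (phi : code M X Y) : R :=
  \sum_(m : M) PM m * \sum_(y : Y | phi.2 y != m) W (phi.1 m) y.

(* P_js(P_M, W) = inf over all codes; the set of codes is finite, so the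
   infimum is a minimum.  The seed value 1 is an upper bound of every
   P_js[phi|P_M,W] when P_M and each W(.|x) are distributions, so it does
   not affect the value. *)
Definition Pjs (R : realFieldType) (M X Y : finType)
  (PM : M -> R) (W : channel R X Y) : R :=
  \big[Num.min/1]_(phi : code M X Y) Pjs_code PM W phi.

Definition marg_Z (R : realFieldType) (X Z : finType) (P : X * Z -> R) (z : Z) : R :=
  \sum_(x : X) P (x, z).
Definition cond_XZ (R : realFieldType) (X Z : finType) (P : X * Z -> R) (x : X) (z : Z) : R :=
  P (x, z) / marg_Z P z.

Definition cond_add_channel (R : realFieldType) (X : finZmodType) (Z : finType)
  (P : X * Z -> R) : channel R X (X * Z)%type :=
  fun x' y => P (y.1 - x', y.2).

(* Random coding.  For an encoder e : M -> X, decode y = (x, z) to a message m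
   whose score P_M(m) P_{X|Z}(x - e m | z) exceeds thr := c / |X|.  A message m
   is decoded wrongly only if its own score is at most thr, or some m' != m
   scores above thr.  By translation invariance of the channel, the first event
   has probability at most the sum in the statement, for every e.  Averaged over
   all encoders, e m' - e m is uniform on X, so the second event has average
   probability at most sum_m P_M(m) sum_m' P_M(m') / (|X| thr) = 1/c by Markov's
   inequality.  The best code is no worse than the average one. *)

From HB Require Import structures.
From mathcomp Require Import all_boot all_order all_algebra.
Set Implicit Arguments.
Unset Strict Implicit.
Unset Printing Implicit Defensive.
Import Order.TTheory GRing.Theory Num.Theory.
Local Open Scope ring_scope.

Lemma sum_ffun_subr (V : nmodType) (M : finType) (X : finZmodType)
    (g : X -> V) (m m' : M) : m != m' ->
  (\sum_(e : {ffun M -> X}) g (e m' - e m)) *+ #|X| =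
  (\sum_(a : X) g a) *+ #|{ffun M -> X}|.
Proof.
move=> neq_mm'.
have shift a : \sum_(e : {ffun M -> X}) g (e m' - e m) =
               \sum_(e : {ffun M -> X}) g (e m' - e m + a).
  pose d : {ffun M -> X} := [ffun k => if k == m' then a else 0].
  rewrite (reindex_inj (addIr d)); apply: eq_bigr => e _.
  by rewrite !ffunE eqxx (negbTE neq_mm') addr0 addrAC.
rewrite -sumr_const (eq_bigr _ (fun a _ => shift a)) exchange_big /= -sumr_const.
apply: eq_bigr => e _.
by rewrite (reindex_inj (addIr (- (e m' - e m)))); apply: eq_bigr => a _; rewrite subrKC.
Qed.

Lemma sum_triple (V : nmodType) (I J K : finType) (F : I * J * K -> V) :
  \sum_(t : I * J * K) F t = \sum_(i : I) \sum_(p : J * K) F (i, p.1, p.2).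
Proof.
under [RHS]eq_bigr => i _ do rewrite -(pair_bigA _ (fun j k => F (i, j, k))).
rewrite (pair_bigA _ (fun i j => \sum_k F (i, j, k))).
rewrite (pair_bigA _ (fun ij k => F (ij.1, ij.2, k))).
by apply: eq_bigr => -[[]].
Qed.

Lemma lt_indicator_mulr_le (F : numDomainType) (a s : F) :
  0 <= s -> (a < s)%R%:R * a <= s.
Proof. by move=> s_ge0; case: (boolP (a < s)) => [/ltW|_]; rewrite ?mul1r ?mul0r. Qed.

Section ThresholdDecoding.

Variables (R : realFieldType) (X : finZmodType) (Z M : finType).
Variables (PXZ : X * Z -> R) (PM : M -> R).
Hypotheses (PXZ_ge0 : forall t, 0 <= PXZ t) (PM_ge0 : forall m, 0 <= PM m).

Local Notation W := (cond_add_channel PXZ).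

Lemma marg_Z_ge0 z : 0 <= marg_Z PXZ z.
Proof. exact: sumr_ge0. Qed.

Lemma marg_Z_mul_cond x z : marg_Z PXZ z * cond_XZ PXZ x z = PXZ (x, z).
Proof.
have [marg0|marg_neq0] := eqVneq (marg_Z PXZ z) 0; last by rewrite mulrC divfK.
by rewrite marg0 mul0r (psumr_eq0P (fun x _ => PXZ_ge0 (x, z)) marg0).
Qed.

Definition score m x z := PM m * cond_XZ PXZ x z.

Lemma score_ge0 m x z : 0 <= score m x z.
Proof. by rewrite mulr_ge0 ?divr_ge0 ?marg_Z_ge0. Qed.

Variable thr : R.

Definition thr_decoder (m0 : M) (e : {ffun M -> X}) : {ffun X * Z -> M} :=
  [ffun y => odflt m0 [pick m | thr < score m (y.1 - e m) y.2]].

Lemma thr_decoder_neq_le m0 e m y :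
  (thr_decoder m0 e y != m)%:R <=
    (score m (y.1 - e m) y.2 <= thr)%R%:R
    + \sum_(m' | m' != m) (thr < score m' (y.1 - e m') y.2)%R%:R :> R.
Proof.
have sum_ge0 : 0 <= \sum_(m' | m' != m) (thr < score m' (y.1 - e m') y.2)%R%:R :> R.
  by apply: sumr_ge0 => m' _; rewrite ler0n.
rewrite /thr_decoder ffunE; case: pickP => [m' thr_lt | no_pick] /=.
  have [_|neq_m'm] := eqVneq m' m; first by rewrite addr_ge0.
  rewrite (bigD1 m' neq_m'm) /= thr_lt addrCA lerDl addr_ge0 ?ler0n //.
  by apply: sumr_ge0 => i _; rewrite ler0n.
have := no_pick m; rewrite /= ltNge => /negbFE ->.
by apply: ler_wpDr => //; case: (_ != _).
Qed.

Definition missed (e : {ffun M -> X}) : R :=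
  \sum_m PM m * \sum_(y : X * Z) W (e m) y * (score m (y.1 - e m) y.2 <= thr)%R%:R.

Definition confused (e : {ffun M -> X}) : R :=
  \sum_m PM m * \sum_(m' | m' != m) \sum_(y : X * Z)
     W (e m) y * (thr < score m' (y.1 - e m') y.2)%R%:R.

Lemma Pjs_code_thr_decoder_le m0 e :
  Pjs_code PM W (e, thr_decoder m0 e) <= missed e + confused e.
Proof.
rewrite /Pjs_code /missed /confused -big_split; apply: ler_sum => m _ /=.
rewrite -mulrDr ler_wpM2l // exchange_big -big_split big_mkcond /=.
apply: ler_sum => y _; rewrite -mulr_sumr -mulrDr.
have -> : (if thr_decoder m0 e y != m then W (e m) y else 0)
          = W (e m) y * (thr_decoder m0 e y != m)%:R.
  by case: (_ != _); rewrite ?mulr1 ?mulr0.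
by apply: ler_wpM2l; [exact: PXZ_ge0 | exact: thr_decoder_neq_le].
Qed.

Lemma missed_le e :
  missed e <= \sum_(t : M * X * Z |
                 (0 < PXZ (t.1.2, t.2)) && (score t.1.1 t.1.2 t.2 <= thr))
                PM t.1.1 * PXZ (t.1.2, t.2).
Proof.
rewrite big_mkcond sum_triple; apply: ler_sum => m _ /=.
rewrite mulr_sumr (reindex_inj (h := fun y : X * Z => (y.1 + e m, y.2))); last first.
  by move=> [x z] [x' z'] /= [/addIr -> ->].
apply: ler_sum => -[x z] _; rewrite /cond_add_channel /= addrK.
rewrite lt_def PXZ_ge0 andbT; have [->|_] /= := eqVneq (PXZ (x, z)) 0.
  by rewrite !(mul0r, mulr0).
by case: (_ <= thr); rewrite ?mulr1 ?mulr0.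
Qed.

Lemma sum_ffun_confused_pair m m' : m' != m ->
  #|X|%:R * \sum_(e : {ffun M -> X}) \sum_(y : X * Z)
      W (e m) y * (thr < score m' (y.1 - e m') y.2)%R%:R =
  #|{ffun M -> X}|%:R *
    \sum_(y : X * Z) marg_Z PXZ y.2 * (thr < score m' y.1 y.2)%R%:R.
Proof.
move=> neq_m'm.
under eq_bigr => e _.
  rewrite (reindex_inj (h := fun y : X * Z => (y.1 + e m', y.2))); last first.
    by move=> [x z] [x' z'] /= [/addIr -> ->].
  rewrite /cond_add_channel /=.
  under eq_bigr => y _ do rewrite (addrK (e m')) -addrA.
  over.
rewrite exchange_big !mulr_sumr; apply: eq_bigr => -[x z] _ /=.
rewrite -mulr_suml !mulrA; congr (_ * _); rewrite !mulr_natl.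
rewrite (sum_ffun_subr (fun a => PXZ (x + a, z))) 1?eq_sym //.
by rewrite [marg_Z _ _](reindex_inj (addrI x)).
Qed.

Lemma false_alarm_le m' : \sum_t PXZ t = 1 ->
  thr * \sum_(y : X * Z) marg_Z PXZ y.2 * (thr < score m' y.1 y.2)%R%:R <= PM m'.
Proof.
move=> PXZ1; apply: le_trans (_ : _ <= \sum_y PM m' * PXZ y) _.
  rewrite mulr_sumr; apply: ler_sum => -[x z] _ /=.
  rewrite -marg_Z_mul_cond mulrCA (mulrC thr) [X in _ <= X]mulrCA.
  by apply: ler_wpM2l; [exact: marg_Z_ge0 | exact: lt_indicator_mulr_le (score_ge0 _ _ _)].
by rewrite -mulr_sumr PXZ1 mulr1.
Qed.

Lemma confused_mean_le : \sum_t PXZ t = 1 -> \sum_m PM m = 1 ->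
  thr * (#|X|%:R * \sum_(e : {ffun M -> X}) confused e) <= #|{ffun M -> X}|%:R.
Proof.
move=> PXZ1 PM1.
set K := #|{ffun M -> X}|%:R.
apply: le_trans (_ : _ <= \sum_m PM m * \sum_m' K * PM m') _; last first.
  under eq_bigr do rewrite -mulr_sumr PM1 mulr1.
  by rewrite -mulr_suml PM1 mul1r.
rewrite /confused exchange_big /= !mulr_sumr; apply: ler_sum => m _.
rewrite -mulr_sumr !mulrA -mulrA mulrCA ler_wpM2l // exchange_big /=.
apply: le_trans (_ : _ <= \sum_(m' | m' != m) K * PM m') _; last first.
  rewrite [X in _ <= X](bigID (fun m' => m' != m)) /= lerDl.
  by apply: sumr_ge0 => m' _; rewrite mulr_ge0.
rewrite mulr_sumr; apply: ler_sum => m' neq_m'm.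
rewrite -mulrA sum_ffun_confused_pair // mulrCA ler_wpM2l //.
exact: false_alarm_le.
Qed.

End ThresholdDecoding.

Theorem mainTheorem4 (R : realFieldType) (X : finZmodType) (Z M : finType)
  (PXZ : X * Z -> R) (PM : M -> R) (c : R) :
  is_dist PXZ -> is_dist PM -> 0 < c ->
  Pjs PM (cond_add_channel PXZ) <=
    \sum_(t : M * X * Z |
            (0 < PXZ (t.1.2, t.2)) &&
            (PM t.1.1 * cond_XZ PXZ t.1.2 t.2 <= c / #|X|%:R))
       PM t.1.1 * PXZ (t.1.2, t.2)
    + c^-1.
Proof.
move=> [PXZ_ge0 PXZ1] [PM_ge0 PM1] c_gt0.
have [m0 _] : exists m0 : M, true.
  case: (pickP (@predT M)) => [m0 _|no_m]; first by exists m0.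
  by move: PM1; rewrite big_pred0 // => /eqP; rewrite eq_sym oner_eq0.
set thr := c / #|X|%:R; set A := \sum_(t | _) _.
set K : R := #|{ffun M -> X}|%:R.
have K_gt0 : 0 < K by rewrite ltr0n; apply/card_gt0P; exists 0.
have X_gt0 : 0 < #|X|%:R :> R by rewrite ltr0n; apply/card_gt0P; exists 0.
have Pjs_le e : Pjs PM (cond_add_channel PXZ) <= A + confused PXZ PM thr e.
  apply: le_trans (bigmin_le _ (e, thr_decoder PXZ PM thr m0 e) _) _.
  apply: le_trans (Pjs_code_thr_decoder_le PXZ_ge0 PM_ge0 _ _ _) _.
  by rewrite lerD2r; apply: missed_le.
have confused_le : \sum_e confused PXZ PM thr e <= K / c.
  have := confused_mean_le PXZ_ge0 PM_ge0 thr PXZ1 PM1.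
  by rewrite mulrA /thr divfK ?gt_eqF // ler_pdivlMr // mulrC.
rewrite -(ler_pM2l K_gt0) mulrDr mulr_natl -sumr_const.
apply: le_trans (ler_sum _ (fun e _ => Pjs_le e)) _.
by rewrite big_split /= sumr_const -mulr_natl lerD2l.
Qed.
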